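(* Let $f$ be a polynomial with integer coefficients of degree $r\ge3$ with positive leading coefficient, positive and strictly increasing on $[0,\infty)$. For each positive integer $N$ and real $x$ let \[ g_N(x)=\frac{f'(x)\left(1-\frac{f(x)}{f(N)}\right)}{\int_0^N f'(t)\left(1-\frac{f(t)}{f(N)}\right)dt}. \] Then for any fixed $\epsilon>0$, $\lim_{N\to\infty}N^{2-\epsilon}\sup_{x\in[0,N]}|g_N'(x)|=0$. *)

From Stdlib Require Import Reals ZArith.
From Coquelicot Require Import Coquelicot.
Open Scope R_scope.

Definition polyZ (a : nat -> Z) (r : nat) (x : R) : R :=
  sum_f_R0 (fun i => IZR (a i) * x ^ i) r.

Definition hN (f : R -> R) (N : nat) (x : R) : R :=
  Derive f x * (1 - f x / f (INR N)).

Definition gN (f : R -> R) (N : nat) (x : R) : R :=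
  hN f N x / RInt (hN f N) 0 (INR N).

Definition supDg (f : R -> R) (N : nat) : Rbar :=
  Lub_Rbar (fun y => exists x, 0 <= x <= INR N /\ y = Rabs (Derive (gN f N) x)).

From Stdlib Require Import Reals ZArith Lra Lia.
From Coquelicot Require Import Coquelicot.
Open Scope R_scope.

(** Since h_N is the
    derivative of f - f^2 / (2 f(N)), the normaliser is explicit,
    K_N = (f(N) - f(0))^2 / (2 f(N)), hence K_N >= f(N) / 8 once f(0) <= f(N) / 2.
    On [0, N] monotonicity gives 0 <= f / f(N) <= 1, so
    |g_N'| <= (|f''| + f'^2 / f(N)) / K_N = O(N^(r-2)) / N^r = O(N^-2),
    and N^(2-eps) O(N^-2) -> 0.  Only r >= 2 and a leading coefficient >= 1
    (which integrality provides) are used. *)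

Definition poly (c : nat -> R) (n : nat) (x : R) : R :=
  sum_f_R0 (fun i => c i * x ^ i) n.

Definition deriv_coef (c : nat -> R) (i : nat) : R := INR (S i) * c (S i).

Definition abs_coef_sum (c : nat -> R) (n : nat) : R :=
  sum_f_R0 (fun i => Rabs (c i)) n.

Lemma poly_S c n x : poly c (S n) x = poly c n x + c (S n) * x ^ S n.
Proof. reflexivity. Qed.

Lemma abs_coef_sum_ge0 c n : 0 <= abs_coef_sum c n.
Proof.
  induction n as [|n IH]; unfold abs_coef_sum in *; simpl.
  - apply Rabs_pos.
  - pose proof (Rabs_pos (c (S n))); lra.
Qed.

Lemma poly_abs_le c n x M :
  0 <= x <= M -> 1 <= M -> Rabs (poly c n x) <= abs_coef_sum c n * M ^ n.
Proof.
  intros Hx HM. induction n as [|n IH].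
  - unfold poly, abs_coef_sum; simpl. rewrite !Rmult_1_r. apply Rle_refl.
  - rewrite poly_S. change (abs_coef_sum c (S n))
      with (abs_coef_sum c n + Rabs (c (S n))).
    eapply Rle_trans; [apply Rabs_triang|].
    rewrite Rabs_mult, (Rabs_right (x ^ S n)) by (apply Rle_ge, pow_le; lra).
    assert (Hx_pow : x ^ S n <= M ^ S n) by (apply pow_incr; lra).
    assert (HM_pow : M ^ n <= M ^ S n) by (apply Rle_pow; [lra | lia]).
    pose proof (abs_coef_sum_ge0 c n). pose proof (Rabs_pos (c (S n))).
    nra.
Qed.

Lemma poly_lead_ge c n N :
  1 <= c (S n) -> 1 <= N -> 2 * abs_coef_sum c n <= N ->
  N ^ S n / 2 <= poly c (S n) N.
Proof.
  intros Hc HN HA. rewrite poly_S.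
  assert (Hlow : - (abs_coef_sum c n * N ^ n) <= poly c n N <= abs_coef_sum c n * N ^ n)
    by (apply Rabs_le_between, poly_abs_le; lra).
  assert (Hpow : 0 <= N ^ n) by (apply pow_le; lra).
  assert (Hsmall : abs_coef_sum c n * N ^ n <= N / 2 * N ^ n)
    by (apply Rmult_le_compat_r; lra).
  assert (Hlead : N * N ^ n <= c (S n) * (N * N ^ n))
    by (assert (0 <= N * N ^ n) by nra; nra).
  simpl. lra.
Qed.

Lemma is_derive_poly c n x :
  is_derive (poly c (S n)) x (poly (deriv_coef c) n x).
Proof.
  induction n as [|n IH].
  - apply is_derive_ext with (fun y => c 0%nat + c 1%nat * y).
    { intros; unfold poly; simpl; ring. }
    unfold poly, deriv_coef; simpl. auto_derive; auto. ring.
  - apply is_derive_ext with (fun y => poly c (S n) y + c (S (S n)) * y ^ S (S n)).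
    { intro y; apply poly_S. }
    rewrite poly_S.
    apply (is_derive_plus (poly c (S n))); [exact IH|].
    auto_derive; [exact I|].
    unfold deriv_coef. rewrite (S_INR (S n)). simpl. ring.
Qed.

Section Profile.

Variables f f' f'' : R -> R.
Hypothesis f_derive : forall x, is_derive f x (f' x).
Hypothesis f'_derive : forall x, is_derive f' x (f'' x).

Lemma Derive_f x : Derive f x = f' x.
Proof. apply is_derive_unique, f_derive. Qed.

Lemma Derive_f' x : Derive f' x = f'' x.
Proof. apply is_derive_unique, f'_derive. Qed.

Lemma Derive_gN N x :
  Derive (gN f N) x =
  (f'' x * (1 - f x / f (INR N)) - f' x ^ 2 / f (INR N)) / RInt (hN f N) 0 (INR N).
Proof.
  unfold gN. set (K := RInt _ _ _). set (fN := f (INR N)).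
  rewrite (Derive_ext _ (fun y => f' y * (1 - f y / fN) / K))
    by (intro y; unfold hN; rewrite Derive_f; reflexivity).
  apply is_derive_unique. auto_derive.
  - repeat split; eexists; (apply f_derive || apply f'_derive).
  - rewrite Derive_f, Derive_f'. unfold Rdiv. ring.
Qed.

Lemma RInt_hN N :
  f (INR N) <> 0 ->
  RInt (hN f N) 0 (INR N) = (f (INR N) - f 0) ^ 2 / (2 * f (INR N)).
Proof.
  intros HfN. set (fN := f (INR N)).
  set (F := fun y => f y - f y ^ 2 / (2 * fN)).
  assert (HF : forall y, is_derive F y (hN f N y)).
  { intro y. unfold F, hN. rewrite Derive_f. auto_derive.
    - repeat split; eexists; apply f_derive.
    - rewrite Derive_f. fold fN. field. exact HfN. }
  apply is_RInt_unique.
  replace ((fN - f 0) ^ 2 / (2 * fN)) with (minus (F (INR N)) (F 0)).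
  - apply (is_RInt_derive F); [intros; apply HF|].
    intros y _. apply continuous_ext with (f := fun y => f' y * (1 - f y / fN)).
    { intro t; unfold hN; rewrite Derive_f; reflexivity. }
    apply (ex_derive_continuous (fun y => f' y * (1 - f y / fN))). auto_derive.
    repeat split; eexists; (apply f_derive || apply f'_derive).
  - unfold minus, plus, opp, F; simpl. fold fN. field. exact HfN.
Qed.

Hypothesis f_pos : forall x, 0 <= x -> 0 < f x.
Hypothesis f_incr : forall x y, 0 <= x -> x < y -> f x < f y.

Lemma RInt_hN_ge N :
  f 0 <= f (INR N) / 2 -> f (INR N) / 8 <= RInt (hN f N) 0 (INR N).
Proof.
  intros Hf0. set (fN := f (INR N)) in *.
  assert (HfN : 0 < fN) by (apply f_pos, pos_INR).
  rewrite RInt_hN by exact (Rgt_not_eq _ _ HfN). fold fN.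
  assert (H2fN : 0 < 2 * fN) by lra.
  apply (Rle_div_r _ _ _ H2fN). nra.
Qed.

Lemma abs_Derive_gN_le N x B1 B2 :
  0 <= x <= INR N -> f' x ^ 2 <= B1 -> Rabs (f'' x) <= B2 ->
  Rabs (Derive (gN f N) x) <= (B2 + B1 / f (INR N)) * Rabs (/ RInt (hN f N) 0 (INR N)).
Proof.
  intros Hx H1 H2. rewrite Derive_gN. unfold Rdiv at 1. rewrite Rabs_mult.
  apply Rmult_le_compat_r; [apply Rabs_pos|].
  set (fN := f (INR N)).
  assert (HfN : 0 < fN) by (apply f_pos; lra).
  assert (Hfx : 0 < f x) by (apply f_pos; lra).
  assert (Hfx_le : f x <= fN).
  { destruct (Rle_lt_or_eq_dec x (INR N) (proj2 Hx)) as [Hlt | ->]; [|apply Rle_refl].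
    left; apply f_incr; lra. }
  assert (Hratio : 0 <= f x / fN <= 1).
  { split; [apply Rdiv_le_0_compat; lra|].
    exact (proj1 (Rdiv_le_1 _ _ HfN) Hfx_le). }
  assert (Hsq : 0 <= f' x ^ 2 / fN <= B1 / fN).
  { split; [apply Rdiv_le_0_compat; [apply pow2_ge_0 | lra]|].
    apply Rmult_le_compat_r; [left; apply Rinv_0_lt_compat |]; lra. }
  apply Rabs_le_between in H2.
  apply Rabs_le_between. nra.
Qed.

End Profile.

Lemma supDg_le f N B :
  (forall x, 0 <= x <= INR N -> Rabs (Derive (gN f N) x) <= B) ->
  is_finite (supDg f N) /\ 0 <= real (supDg f N) <= B.
Proof.
  intros HB. unfold supDg.
  set (E := fun y => exists x, 0 <= x <= INR N /\ y = Rabs (Derive (gN f N) x)).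
  destruct (Lub_Rbar_correct E) as [Hub Hlub].
  assert (Hle : Rbar_le (Lub_Rbar E) B).
  { apply Hlub. intros y [x [Hx ->]]. now apply HB. }
  assert (Hge : Rbar_le (Rabs (Derive (gN f N) 0)) (Lub_Rbar E)).
  { apply Hub. exists 0. split; [split; [lra | apply pos_INR] | reflexivity]. }
  pose proof (Rabs_pos (Derive (gN f N) 0)).
  destruct (Lub_Rbar E); simpl in *; try contradiction.
  split; [reflexivity | lra].
Qed.

Lemma is_lim_seq_Rpower_INR_neg eps :
  0 < eps -> is_lim_seq (fun n => Rpower (INR n) (- eps)) 0.
Proof.
  intros Heps.
  assert (Hln : is_lim_seq (fun n => ln (INR n)) p_infty).
  { apply (is_lim_comp_seq ln INR p_infty p_infty is_lim_ln_p).
    - exists 0%nat; discriminate.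
    - exact is_lim_seq_INR. }
  assert (Hlin : is_lim_seq (fun n => - eps * ln (INR n)) m_infty).
  { replace m_infty with (Rbar_mult (- eps) p_infty).
    - now apply is_lim_seq_scal_l.
    - simpl. destruct (Rle_dec 0 (- eps)) as [Hneg | _]; [exfalso | reflexivity].
      exact (Rle_not_lt _ _ Hneg (Ropp_lt_gt_0_contravar _ Heps)). }
  apply (is_lim_comp_seq exp _ m_infty 0 is_lim_exp_m); [|exact Hlin].
  exists 0%nat; discriminate.
Qed.

Lemma is_lim_seq_Rpower_mul_inv_sq eps C (s : nat -> R) :
  0 < eps -> eventually (fun n => 0 <= s n <= C / INR n ^ 2) ->
  is_lim_seq (fun n => Rpower (INR n) (2 - eps) * s n) 0.
Proof.
  intros Heps Hs.
  apply is_lim_seq_le_le_loc with (fun _ => 0) (fun n => C * Rpower (INR n) (- eps)).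
  - apply (filter_imp (fun n => (0 <= s n <= C / INR n ^ 2) /\ (1 <= n)%nat)).
    2: { apply filter_and; [exact Hs | exists 1%nat; auto]. }
    intros n [[Hs0 HsC] Hn].
    (* n >= 1 is needed: [Rpower 0 y = 1] whereas [0 ^ 2 = 0]. *)
    assert (HN : 0 < INR n) by (apply lt_0_INR; lia).
    assert (Hpow : Rpower (INR n) (2 - eps) = INR n ^ 2 * Rpower (INR n) (- eps)).
    { replace (2 - eps) with (2 + - eps) by ring.
      now rewrite Rpower_plus, <- Rpower_pow by exact HN. }
    assert (Hpos : 0 < Rpower (INR n) (- eps)) by apply exp_pos.
    assert (Hsq : 0 < INR n ^ 2) by (apply pow_lt; exact HN).
    rewrite Hpow. split.
    + apply Rmult_le_pos; [apply Rmult_le_pos|]; lra.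
    + apply Rle_trans with (INR n ^ 2 * Rpower (INR n) (- eps) * (C / INR n ^ 2)).
      * apply Rmult_le_compat_l; [apply Rmult_le_pos|]; lra.
      * right. field. lra.
  - apply is_lim_seq_const.
  - replace (Finite 0) with (Rbar_mult C 0) by (simpl; f_equal; ring).
    now apply is_lim_seq_scal_l, is_lim_seq_Rpower_INR_neg.
Qed.

Section PolynomialProfile.

Variables (c : nat -> R) (n : nat).
Let f := poly c (S (S n)).
Let f' := poly (deriv_coef c) (S n).
Let f'' := poly (deriv_coef (deriv_coef c)) n.
Let A1 := abs_coef_sum (deriv_coef c) (S n).
Let A2 := abs_coef_sum (deriv_coef (deriv_coef c)) n.

Hypothesis lead_ge1 : 1 <= c (S (S n)).
Hypothesis f_pos : forall x, 0 <= x -> 0 < f x.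
Hypothesis f_incr : forall x y, 0 <= x -> x < y -> f x < f y.

Let f_derive x : is_derive f x (f' x) := is_derive_poly c (S n) x.
Let f'_derive x : is_derive f' x (f'' x) := is_derive_poly (deriv_coef c) n x.

Lemma abs_Derive_gN_poly_le N M x :
  0 <= x <= INR N -> INR N <= M -> 1 <= M ->
  Rabs (Derive (gN f N) x) <=
  (A2 * M ^ n + (A1 * M ^ S n) ^ 2 / f (INR N)) * Rabs (/ RInt (hN f N) 0 (INR N)).
Proof.
  intros Hx HNM HM.
  apply (abs_Derive_gN_le f f' f'' f_derive f'_derive f_pos f_incr); [exact Hx | |].
  - rewrite <- pow2_abs. apply pow_incr. split; [apply Rabs_pos|].
    apply poly_abs_le; lra.
  - apply poly_abs_le; lra.
Qed.

Lemma poly_large_ge X :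
  1 + 2 * abs_coef_sum c (S n) + 4 * f 0 <= X ->
  X ^ S (S n) / 2 <= f X /\ f 0 <= f X / 2.
Proof.
  intros HX.
  assert (Hf0 : 0 < f 0) by (apply f_pos; lra).
  assert (HA0 := abs_coef_sum_ge0 c (S n)).
  assert (Hlead : X ^ S (S n) / 2 <= f X) by (apply poly_lead_ge; lra).
  split; [exact Hlead|].
  assert (HXpow : X ^ 1 <= X ^ S (S n)) by (apply Rle_pow; [lra | lia]).
  rewrite pow_1 in HXpow. lra.
Qed.

Lemma abs_Derive_gN_poly_decay N x :
  1 + 2 * abs_coef_sum c (S n) + 4 * f 0 <= INR N -> 0 <= x <= INR N ->
  Rabs (Derive (gN f N) x) <= 16 * (A2 + 2 * A1 ^ 2) / INR N ^ 2.
Proof.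
  intros HN Hx.
  assert (Hf0 : 0 < f 0) by (apply f_pos; lra).
  assert (HA0 := abs_coef_sum_ge0 c (S n)).
  eapply Rle_trans; [apply (abs_Derive_gN_poly_le N (INR N)); lra|].
  destruct (poly_large_ge (INR N) HN) as [Hlead Hf0N].
  assert (HK := RInt_hN_ge f f' f'' f_derive f'_derive f_pos N Hf0N).
  set (K := RInt (hN f N) 0 (INR N) : R) in *.
  set (Nr := INR N) in *. set (fN := f Nr) in *. set (Y := Nr ^ n).
  replace (Nr ^ S n) with (Nr * Y) by reflexivity.
  replace (Nr ^ S (S n)) with (Nr * Nr * Y) in Hlead by (unfold Y; simpl; ring).
  set (Q := Nr * Nr * Y) in *.
  assert (HY : 1 <= Y) by (apply pow_R1_Rle; lra).
  assert (HQ : 0 < Q) by (unfold Q; nra).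
  rewrite Rabs_right by (left; apply Rinv_0_lt_compat; lra).
  assert (HinvfN : 0 <= / fN <= 2 / Q).
  { split; [left; apply Rinv_0_lt_compat; lra|].
    replace (2 / Q) with (/ (Q / 2)) by (field; lra).
    apply Rinv_le_contravar; lra. }
  assert (HinvK : 0 <= / K <= 16 / Q).
  { split; [left; apply Rinv_0_lt_compat; lra|].
    replace (16 / Q) with (/ (Q / 16)) by (field; lra).
    apply Rinv_le_contravar; lra. }
  assert (HA2 : 0 <= A2) by apply abs_coef_sum_ge0.
  set (D := (A1 * (Nr * Y)) ^ 2).
  assert (HD : 0 <= D) by apply pow2_ge_0.
  assert (HD_fN : 0 <= D / fN <= D * (2 / Q))
    by (split; [apply Rmult_le_pos | apply Rmult_le_compat_l]; lra).
  apply Rle_trans with ((A2 * Y + D * (2 / Q)) * (16 / Q)).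
  - apply Rmult_le_compat; nra.
  - right. unfold D, Q. field. lra.
Qed.

End PolynomialProfile.

Theorem lemma8 (a : nat -> Z) (r : nat) :
  (3 <= r)%nat ->
  (0 < a r)%Z ->
  (forall x, 0 <= x -> 0 < polyZ a r x) ->
  (forall x y, 0 <= x -> x < y -> polyZ a r x < polyZ a r y) ->
  forall eps : R, 0 < eps ->
    (forall N : nat, is_finite (supDg (polyZ a r) N)) /\
    is_lim_seq
      (fun N : nat => Rpower (INR N) (2 - eps) * real (supDg (polyZ a r) N))
      (Finite 0).
Proof.
  intros Hr Hlead Hpos Hincr eps Heps.
  destruct r as [|[|n]]; [lia | lia |].
  set (c := fun i => IZR (a i)).
  change (polyZ a (S (S n))) with (poly c (S (S n))) in *.
  assert (Hc : 1 <= c (S (S n))) by (apply IZR_le; lia).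
  split.
  - intro N. eapply proj1, supDg_le.
    intros x Hx. apply (abs_Derive_gN_poly_le c n Hpos Hincr N (Rmax 1 (INR N)));
      [exact Hx | apply Rmax_r | apply Rmax_l].
  - apply (is_lim_seq_Rpower_mul_inv_sq eps
      (16 * (abs_coef_sum (deriv_coef (deriv_coef c)) n
             + 2 * abs_coef_sum (deriv_coef c) (S n) ^ 2))); [exact Heps|].
    set (T := 1 + 2 * abs_coef_sum c (S n) + 4 * poly c (S (S n)) 0).
    apply (filter_imp (fun N => T <= INR N)).
    + intros N HN. apply supDg_le.
      intros x Hx. now apply (abs_Derive_gN_poly_decay c n Hc Hpos Hincr N x).
    + apply is_lim_seq_INR. exists T. intros x Hx. lra.
Qed.
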